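(* Let $u$ be a drift function and $\alpha\in\mathbb R_+$. Then for every $x\in\mathbf X$, \[\sup_{n\in\mathbb N}\sum_{k=0}^{n}\frac{P^k(u-Pu)(x)}{(k+1)^\alpha}\le u(x).\]
   Context: $(X_n)$ Markov chain on a complete separable metric space $\mathbf X$, $\mathbb P_x$ its law from $x$, $Pf(x)=\mathbb E_xf(X_1)$. $\tau$ is a $\theta$-compatible stopping time ($\mathbb P_x(\tau=0)=0$ and $\mathbb P_x$-a.s. $\tau\ge2\Rightarrow\tau\circ\theta=\tau-1$) with $\mathbb E_x\tau<\infty$ for all $x$; $Qf(x)=\mathbb E_x[f(X_\tau)\mathbf 1_{\tau<\infty}]$. A drift function is a Borel $u:\mathbf X\to[1,\infty)$ such that $u-Pu$ is bounded below and $Qu$, $x\mapsto\mathbb E_x\tau/u(x)$ and $P(u-Pu+B_u)/(u-Pu+B_u)$ are bounded on $\mathbf X$, where $B_u=\sup(Pu-u)+1$. *)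

From HB Require Import structures.
From mathcomp Require Import all_boot all_order all_algebra.
From mathcomp Require Import all_classical all_reals all_analysis.
Set Implicit Arguments. Unset Strict Implicit. Unset Printing Implicit Defensive.
Import Order.TTheory GRing.Theory Num.Theory.
Local Open Scope classical_set_scope.
Local Open Scope ring_scope.

Definition Borel (M : topologicalType) := g_sigma_algebraType (@open M).

(* M is metric (Hausdorff) and separable; completeness is given by the type
   completePseudoMetricType. *)
Definition separable_metric (R : realType) (M : completePseudoMetricType R) : Prop :=
  hausdorff_space M /\ exists D : set M, countable D /\ dense D.

Section defs.
Context {R : realType} {dT : measure_display} {T : measurableType dT}.
Local Open Scope ereal_scope.

Fixpoint Piter (P : R.-pker T ~> T) (k : nat) (f : T -> \bar R) : T -> \bar R :=
  match k with
  | 0%N => f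
  | k'.+1 => fun x => \int[P x]_y Piter P k' f y
  end.

Definition Pop (P : R.-pker T ~> T) (f : T -> \bar R) : T -> \bar R := Piter P 1 f.

(* finite-dimensional distributions of the Markov chain with kernel P started at x:
   fdd P [:: A0; ...; An] x = P_x(X_0 in A0, ..., X_n in An) *)
Fixpoint fdd (P : R.-pker T ~> T) (As : seq (set T)) (x : T) : \bar R :=
  match As with
  | [::] => 1
  | A :: As' => (\1_A x)%:E * \int[P x]_y fdd P As' y
  end.

Context {dO : measure_display} {Omega : measurableType dO}.

Definition markov_chain (P : R.-pker T ~> T) (X : nat -> Omega -> T)
    (theta : Omega -> Omega) (Px : T -> probability Omega R) : Prop :=
  (forall n, measurable_fun setT (X n)) /\
  measurable_fun setT theta /\
  (forall n w, X n (theta w) = X n.+1 w) /\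
  (forall x (As : seq (set T)), (forall A, A \in As -> measurable A) ->
     Px x [set w | forall i, (i < size As)%N -> nth setT As i (X i w)] = fdd P As x).

(* stopping times take values in nat u {oo}; None stands for +oo *)
Definition stopping_time (X : nat -> Omega -> T) (tau : Omega -> option nat) : Prop :=
  forall n, <<s \bigcup_(i in [set i | (i <= n)%N]) [set X i @^-1` A | A in measurable] >>
              [set w | tau w = Some n].

Definition theta_compatible (X : nat -> Omega -> T) (theta : Omega -> Omega)
    (Px : T -> probability Omega R) (tau : Omega -> option nat) : Prop :=
  forall x, Px x [set w | tau w = Some 0%N] = 0 /\
    {ae Px x, forall w,
       (forall n, tau w = Some n -> (2 <= n)%N -> tau (theta w) = Some n.-1) /\
       (tau w = None -> tau (theta w) = None)}.

Definition tau_e (tau : Omega -> option nat) (w : Omega) : \bar R :=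
  if tau w is Some n then (n%:R)%:E else +oo.

Definition Etau (Px : T -> probability Omega R) (tau : Omega -> option nat) (x : T) : \bar R :=
  \int[Px x]_w tau_e tau w.

Definition Qop (X : nat -> Omega -> T) (Px : T -> probability Omega R)
    (tau : Omega -> option nat) (f : T -> \bar R) (x : T) : \bar R :=
  \int[Px x]_w (if tau w is Some n then f (X n w) else 0).

Definition bounded_fun (g : T -> \bar R) : Prop := exists M : R, forall x, `|g x| <= M%:E.

Definition uPu (P : R.-pker T ~> T) (u : T -> R) : T -> \bar R :=
  fun x => (u x)%:E - Pop P (fun y => (u y)%:E) x.

Definition B_u (P : R.-pker T ~> T) (u : T -> R) : \bar R :=
  ereal_sup (range (fun x => Pop P (fun y => (u y)%:E) x - (u x)%:E)) + 1.

Definition drift_function (P : R.-pker T ~> T) (X : nat -> Omega -> T)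
    (Px : T -> probability Omega R) (tau : Omega -> option nat) (u : T -> R) : Prop :=
  measurable_fun setT u /\
  (forall x, 1 <= u x)%R /\
  (exists c : R, forall x, c%:E <= uPu P u x) /\
  bounded_fun (Qop X Px tau (fun y => (u y)%:E)) /\
  bounded_fun (fun x => Etau Px tau x * ((u x)^-1)%:E) /\
  (let g := fun x => uPu P u x + B_u P u in
   bounded_fun (fun x => Pop P g x * ((fine (g x))^-1)%:E)).

End defs.

(* Writing [a_k = P^k u], the lower bound [c] on [u - Pu] gives [a_(k+1) <= a_k - c],
   so every [a_k] is finite and [P^k (u - Pu) = a_k - a_(k+1)]. Abel summation of these
   differences of the nonnegative [a_k] against the nonincreasing weights
   [(k+1)^-alpha] bounds the weighted sum by [a_0 = u]. *)
From HB Require Import structures.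
From mathcomp Require Import all_boot all_order all_algebra.
From mathcomp Require Import all_classical all_reals all_analysis.
From mathcomp Require Import measurable_realfun lra.
Set Implicit Arguments. Unset Strict Implicit. Unset Printing Implicit Defensive.
Import Order.TTheory GRing.Theory Num.Theory.
Local Open Scope classical_set_scope.
Local Open Scope ring_scope.

Lemma abel_telescope_le (R : realFieldType) (r w : nat -> R) :
  (forall k, 0 <= r k) -> (forall k, 0 <= w k) -> (forall k, w k.+1 <= w k) ->
  forall n, \sum_(0 <= k < n.+1) (r k - r k.+1) * w k <= r 0%N * w 0%N.
Proof.
move=> r_ge0 w_ge0 w_dec n.
suff abel m : \sum_(0 <= k < m.+1) (r k - r k.+1) * w k + r m.+1 * w m
              <= r 0%N * w 0%N.
  by apply: le_trans (abel n); rewrite lerDl mulr_ge0.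
elim: m => [|m IH]; first by rewrite big_nat1 mulrBl subrK.
rewrite big_nat_recr //=; apply: le_trans IH.
have : r m.+1 * w m.+1 <= r m.+1 * w m by apply: ler_wpM2l.
lra.
Qed.

Section kernel_iterates.
Context (R : realType) (dT : measure_display) (T : measurableType dT).
Variable P : R.-pker T ~> T.
Local Open Scope ereal_scope.

Lemma Piter_ge0 (f : T -> \bar R) : (forall y, 0 <= f y) ->
  forall k y, 0 <= Piter P k f y.
Proof.
move=> f_ge0; elim=> [|k IH] y //=.
exact: integral_ge0.
Qed.

Lemma measurable_Piter (f : T -> \bar R) :
  measurable_fun setT f -> (forall y, 0 <= f y) ->
  forall k, measurable_fun [set: T] (Piter P k f).
Proof.
move=> mf f_ge0; elim=> [|k IH] //=.
apply: (measurable_fun_integral_kernel (l := P)) => //.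
- by move=> U mU; exact: measurable_kernel.
- by move=> y; exact: Piter_ge0.
Qed.

Variables (u : T -> R) (c : R).
Hypotheses (mu : measurable_fun setT u) (u_ge0 : forall y, (0 <= u y)%R).
Hypotheses (c_le0 : (c <= 0)%R) (uPu_ge : forall y, c%:E <= uPu P u y).

Let a k := Piter P k (fun y => (u y)%:E).

Let a_ge0 k y : 0 <= a k y.
Proof. by apply: Piter_ge0 => z; rewrite lee_fin. Qed.

Let measurable_a k : measurable_fun [set: T] (a k).
Proof.
by apply: measurable_Piter => [|z]; [exact/measurable_EFinP | rewrite lee_fin].
Qed.

Lemma Piter_succ_le k y : a k.+1 y <= a k y - c%:E.
Proof.
elim: k y => [|k IH] y.
  have := uPu_ge y; have := a_ge0 1 y; rewrite /uPu /Pop /a /=.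
  case: (\int[P y]_z (u z)%:E) => [s| |] //= _.
  by rewrite -!EFinB !lee_fin; lra.
rewrite /a /=.
apply: (@le_trans _ _ (\int[P y]_z (a k z + (- c)%:E))).
  apply: ge0_le_integral => //.
  - by move=> z _; exact: (a_ge0 k.+1).
  - exact: (measurable_a k.+1).
  - exact/emeasurable_funD/measurable_cst.
  - by move=> z _; exact: IH.
rewrite ge0_integralD //.
- by rewrite integral_cst // prob_kernel mule1 EFinN.
- by move=> z _; rewrite lee_fin oppr_ge0.
Qed.

Lemma fin_num_Piter k y : a k y \is a fin_num.
Proof.
elim: k y => [|k IH] y //.
rewrite ge0_fin_numE; last exact: a_ge0.
apply: le_lt_trans (Piter_succ_le k y) _.
by rewrite -(fineK (IH y)) -EFinB ltry.
Qed.

Lemma Piter_uPu k y : Piter P k (uPu P u) y = a k y - a k.+1 y.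
Proof.
elim: k y => [|k IH] y //=.
have integrable_a j : (P y).-integrable setT (a j).
  apply/integrableP; split; first exact: measurable_a.
  under eq_integral => z _ do rewrite gee0_abs ?a_ge0 //.
  by rewrite -ge0_fin_numE ?(fin_num_Piter j.+1) ?(a_ge0 j.+1).
under eq_integral => z _ do rewrite IH.
exact: integralB.
Qed.

End kernel_iterates.

Theorem mainTheorem16 (R : realType) (M : completePseudoMetricType R)
  (dO : measure_display) (Omega : measurableType dO)
  (P : R.-pker (Borel M) ~> (Borel M)) (X : nat -> Omega -> Borel M)
  (theta : Omega -> Omega) (Px : Borel M -> probability Omega R)
  (tau : Omega -> option nat) (u : Borel M -> R) (alpha : R) :
  separable_metric M ->
  markov_chain P X theta Px ->
  stopping_time X tau ->
  theta_compatible X theta Px tau ->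
  (forall x, (Etau Px tau x < +oo)%E) ->
  drift_function P X Px tau u ->
  0 <= alpha ->
  forall x : Borel M,
    (ereal_sup (range (fun n : nat =>
       \sum_(0 <= k < n.+1)
         (Piter P k (uPu P u) x * ((k.+1%:R `^ alpha)^-1)%:E)))
     <= (u x)%:E)%E.
Proof.
move=> _ _ _ _ _ [mu [u_ge1 [[c uPu_ge] _]]] alpha_ge0 x.
have u_ge0 y : 0 <= u y by apply: le_trans (u_ge1 y).
pose c' := Num.min c 0.
have c'_le0 : c' <= 0 by rewrite ge_min lexx orbT.
have uPu_ge' y : (c'%:E <= uPu P u y)%E.
  by apply: le_trans (uPu_ge y); rewrite lee_fin ge_min lexx.
have a_fin k := fineK (fin_num_Piter mu u_ge0 c'_le0 uPu_ge' k x).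
pose r k := fine (Piter P k (fun y => (u y)%:E) x).
pose w k : R := (k.+1%:R `^ alpha)^-1.
have r_ge0 k : 0 <= r k by rewrite fine_ge0 // Piter_ge0 // => y; rewrite lee_fin.
have w_ge0 k : 0 <= w k by rewrite invr_ge0 powR_ge0.
have w_dec k : w k.+1 <= w k.
  rewrite lef_pV2 ?posrE ?powR_gt0 //.
  by apply: ge0_ler_powR => //; rewrite ?nnegrE // ler_nat.
apply: ge_ereal_sup => _ [n _ <-].
under eq_bigr => k _ do
  rewrite (Piter_uPu mu u_ge0 c'_le0 uPu_ge') -(a_fin k) -(a_fin k.+1) -EFinB -EFinM.
rewrite sumEFin lee_fin.
have -> : u x = r 0%N * w 0%N by rewrite /w powR1 invr1 mulr1.
exact: abel_telescope_le.
Qed.
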